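(* Let $A\in\mathcal{V}$ be hyperarchimedean. Then every congruence $\theta$ of $A$ has $CBLP$.
   Context: $\mathcal{V}$ is a congruence modular, semidegenerate variety (no nontrivial algebra has a one-element subalgebra) of finite signature. For $B\in\mathcal{V}$: $Con(B)$ is its congruence lattice with bounds $\Delta_B,\nabla_B$, $[\cdot,\cdot]$ the Freese–McKenzie commutator, $K(B)$ the compact congruences; $[\alpha,\alpha]^0=\alpha$, $[\alpha,\alpha]^{n+1}=[[\alpha,\alpha]^n,[\alpha,\alpha]^n]$. A congruence $\phi\neq\nabla_B$ is prime if $[\alpha,\beta]\subseteq\phi$ implies $\alpha\subseteq\phi$ or $\beta\subseteq\phi$; $\rho(\theta)$ is the intersection of primes containing $\theta$. $B(Con(B))$ is the Boolean algebra of complemented elements of $Con(B)$. When $K(B)$ is closed under the commutator, the reticulation $L(B)=K(B)/{\equiv}$ ($\alpha\equiv\beta$ iff $\rho(\alpha)=\rho(\beta)$) is a bounded distributive lattice with canonical map $\lambda_B$, mapping $B(Con(B))$ injectively into $B(L(B))$; the reticulation preserves the Boolean center if this map is onto $B(L(B))$. Standing assumption: for every $B\in\mathcal{V}$, $K(B)$ is closed under the commutator and the reticulation of $B$ preserves the Boolean center. $A$ is hyperarchimedean if for every $\alpha\in Con(A)$ there is $n\geq1$ with $[\alpha,\alpha]^n\in B(Con(A))$. A congruence $\theta$ of $A$ has $CBLP$ if for every $\beta\in B(Con(A/\theta))$ there is $\alpha\in B(Con(A))$ with $(\alpha\vee\theta)/\theta=\beta$. *)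

From mathcomp Require Import all_boot.
From Stdlib Require List.
From Stdlib Require Import ClassicalEpsilon.

Set Implicit Arguments.
Unset Strict Implicit.
Unset Printing Implicit Defensive.

Record signature := Signature { sop : finType; sar : sop -> nat }.

Record algebra (S : signature) := Algebra {
  carrier :> Type;
  interp : forall o : sop S, ('I_(sar o) -> carrier) -> carrier }.

Inductive term (S : signature) (X : Type) : Type :=
  | tvar : X -> term S X
  | tapp : forall o : sop S, ('I_(sar o) -> term S X) -> term S X.

Fixpoint eval (S : signature) (A : algebra S) (X : Type) (e : X -> A)
  (t : term S X) : A :=
  match t with
  | tvar x => e x
  | tapp o ts => @interp S A o (fun i => eval e (ts i))
  end.

(* A variety is an equational class Mod(Sigma) (Birkhoff). *)
Definition identities (S : signature) := term S nat -> term S nat -> Prop.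

Definition in_variety (S : signature) (Sigma : identities S) (A : algebra S) : Prop :=
  forall s t, Sigma s t -> forall e : nat -> A, eval e s = eval e t.

Definition crel (T : Type) := T -> T -> Prop.

Section Con.
Variables (S : signature) (A : algebra S).

Definition subrel (a b : crel A) := forall x y, a x y -> b x y.
Definition rel_eq (a b : crel A) := forall x y, a x y <-> b x y.

Definition is_congruence (th : crel A) : Prop :=
  (forall x, th x x) /\ (forall x y, th x y -> th y x) /\
  (forall x y z, th x y -> th y z -> th x z) /\
  (forall (o : sop S) (a b : 'I_(sar o) -> A),
      (forall i, th (a i) (b i)) -> th (@interp S A o a) (@interp S A o b)).

Definition Delta : crel A := fun x y => x = y.
Definition Nabla : crel A := fun _ _ => True.

Definition Cg (R : crel A) : crel A :=
  fun x y => forall th, is_congruence th -> subrel R th -> th x y.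

Definition cmeet (a b : crel A) : crel A := fun x y => a x y /\ b x y.
Definition cjoin (a b : crel A) : crel A := Cg (fun x y => a x y \/ b x y).
Definition csup (F : crel A -> Prop) : crel A :=
  Cg (fun x y => exists a, F a /\ a x y).

Definition compact (a : crel A) : Prop :=
  is_congruence a /\
  forall F : crel A -> Prop, (forall b, F b -> is_congruence b) ->
    subrel a (csup F) ->
    exists l : list (crel A), (forall b, List.In b l -> F b) /\
                              subrel a (csup (fun b => List.In b l)).

Definition complemented (a : crel A) : Prop :=
  is_congruence a /\
  exists b, is_congruence b /\ rel_eq (cmeet a b) Delta /\ rel_eq (cjoin a b) Nabla.

Definition envsum (X Y : Type) (a : X -> A) (c : Y -> A) : X + Y -> A :=
  fun v => match v with inl i => a i | inr j => c j end.

Definition centralizes (a b d : crel A) : Prop :=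
  forall (t : term S (nat + nat)) (x y u v : nat -> A),
    (forall i, a (x i) (y i)) -> (forall j, b (u j) (v j)) ->
    d (eval (envsum x u) t) (eval (envsum x v) t) ->
    d (eval (envsum y u) t) (eval (envsum y v) t).

Definition commutator (a b : crel A) : crel A :=
  fun x y => forall d, is_congruence d -> centralizes a b d -> d x y.

Fixpoint comm_pow (a : crel A) (n : nat) : crel A :=
  match n with
  | 0 => a
  | n'.+1 => commutator (comm_pow a n') (comm_pow a n')
  end.

Definition prime_cong (p : crel A) : Prop :=
  is_congruence p /\ ~ rel_eq p Nabla /\
  forall a b, is_congruence a -> is_congruence b ->
    subrel (commutator a b) p -> subrel a p \/ subrel b p.

Definition rho (th : crel A) : crel A :=
  fun x y => forall p, prime_cong p -> subrel th p -> p x y.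

Definition K_closed : Prop :=
  forall a b, compact a -> compact b -> compact (commutator a b).

(* The element lambda_A(a) of L(A) = K(A)/== lies in B(L(A)), where
   lambda(a) /\ lambda(b) = lambda([a,b]), lambda(a) \/ lambda(b) = lambda(a \/ b),
   0 = lambda(Delta), 1 = lambda(Nabla), and lambda(a) = lambda(b) iff rho a = rho b. *)
Definition ret_boolean (a : crel A) : Prop :=
  compact a /\
  exists b, compact b /\
    rel_eq (rho (commutator a b)) (rho Delta) /\
    rel_eq (rho (cjoin a b)) (rho Nabla).

(* lambda_A restricted to B(Con(A)) is onto B(L(A)) *)
Definition preserves_boolean_center : Prop :=
  forall a, ret_boolean a ->
    exists g, complemented g /\ compact g /\ rel_eq (rho g) (rho a).

Definition hyperarchimedean : Prop :=
  forall a, is_congruence a ->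
    exists n, 1 <= n /\ complemented (comm_pow a n).

Definition qcar (th : crel A) : Type := { P : A -> Prop | exists a, P = th a }.

Definition qrep (th : crel A) (X : qcar th) : A :=
  proj1_sig (constructive_indefinite_description _ (proj2_sig X)).

Definition qproj (th : crel A) (a : A) : qcar th :=
  exist _ (th a) (ex_intro _ a erefl).

Definition quotient (th : crel A) : algebra S :=
  @Algebra S (qcar th)
    (fun o args => qproj th (@interp S A o (fun i => qrep (args i)))).

Definition quot_rel (th a : crel A) : crel (quotient th) :=
  fun X Y => exists x y, X = qproj th x /\ Y = qproj th y /\ a x y.

End Con.

Definition CBLP (S : signature) (A : algebra S) (th : crel A) : Prop :=
  forall b : crel (quotient th), @complemented S (quotient th) b ->
    exists a : crel A, complemented a /\ rel_eq (@quot_rel S A th (cjoin a th)) b.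


Definition congruence_modular (S : signature) (Sigma : identities S) : Prop :=
  forall B : algebra S, in_variety Sigma B ->
    forall a b c : crel B, is_congruence a -> is_congruence b -> is_congruence c ->
      subrel a c -> rel_eq (cjoin a (cmeet b c)) (cmeet (cjoin a b) c).

Definition semidegenerate (S : signature) (Sigma : identities S) : Prop :=
  forall B : algebra S, in_variety Sigma B ->
    (exists x : B, forall o : sop S, @interp S B o (fun _ => x) = x) ->
    forall y z : B, y = z.

(* Pull a complemented pair b, b' of Con(A/th) back to congruences al, al' above th: then
   al v al' = Nabla and al ^ al' <= th.  In a congruence modular variety the centrality relation
   C(-, bt; d) is monotone in d and symmetric (Day terms and the shifting lemma), and the
   congruences centralizing bt modulo d have a largest element (d : bt).  If x v y = Nabla and
   d = [x,x] v y, then x and y lie below (d : x), so Nabla centralizes x modulo d; by symmetry x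
   centralizes Nabla, so (d : Nabla) contains x and y and is Nabla, and semidegeneracy forces
   d = Nabla.  Iterating, [al,al]^n v al' = Nabla, and modularity gives
   al = [al,al]^n v (al' ^ al) <= [al,al]^n v th <= al.  For n given by hyperarchimedeanity,
   [al,al]^n is complemented and lifts b. *)

From Pilot Require Import Defs.
From mathcomp Require Import all_boot.
From Stdlib Require Import FunctionalExtensionality ProofIrrelevance PropExtensionality.
From Stdlib Require Import ClassicalEpsilon Relation_Operators.

Set Implicit Arguments.
Unset Strict Implicit.
Unset Printing Implicit Defensive.

(* ssrbool also exports a [subrel] *)
Local Notation subrel := Defs.subrel.

Lemma sig_eq (T : Type) (P : T -> Prop) (p q : {x | P x}) :
  proj1_sig p = proj1_sig q -> p = q.
Proof. by apply: eq_sig_hprop => x; apply: proof_irrelevance. Qed.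

Section Congruences.
Variables (S : signature) (A : algebra S).

Lemma cong_refl (R : crel A) : is_congruence R -> forall x, R x x.
Proof. by case. Qed.

Lemma cong_sym (R : crel A) : is_congruence R -> forall x y, R x y -> R y x.
Proof. by case=> _ []. Qed.

Lemma cong_trans (R : crel A) :
  is_congruence R -> forall x y z, R x y -> R y z -> R x z.
Proof. by case=> _ [] _ []. Qed.

Lemma cong_interp (R : crel A) : is_congruence R ->
  forall (o : sop S) (a b : 'I_(sar o) -> A),
    (forall i, R (a i) (b i)) -> R (interp a) (interp b).
Proof. by case=> _ [] _ []. Qed.

Lemma cong_eval (R : crel A) (X : Type) (e e' : X -> A) (t : term S X) :
  is_congruence R -> (forall x, R (e x) (e' x)) -> R (eval e t) (eval e' t).
Proof.
move=> HR He; elim: t => [x|o ts IH] /=; first exact: He.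
exact: cong_interp.
Qed.

Lemma eval_ext (X : Type) (e e' : X -> A) (t : term S X) :
  e =1 e' -> eval e t = eval e' t.
Proof. by move=> /functional_extensionality ->. Qed.

Lemma compatible_of_unary (R : crel A) :
  (forall x, R x x) -> (forall x y z, R x y -> R y z -> R x z) ->
  (forall (o : sop S) (f : 'I_(sar o) -> A) (i0 : 'I_(sar o)) w w', R w w' ->
     R (interp (fun i => if i == i0 then w else f i))
       (interp (fun i => if i == i0 then w' else f i))) ->
  forall (o : sop S) (a b : 'I_(sar o) -> A),
    (forall i, R (a i) (b i)) -> R (interp a) (interp b).
Proof.
move=> Rrefl Rtrans Runary o a b Hab.
pose c k := fun i : 'I_(sar o) => if (i < k)%N then b i else a i.
have -> : b = c (sar o) by apply: functional_extensionality => i; rewrite /c ltn_ord.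
elim: (sar o) => [|k IH].
  by have -> : c 0 = a by apply: functional_extensionality.
apply: Rtrans IH _; case: (ltnP k (sar o)) => Hk; last first.
  have -> : c k.+1 = c k; last exact: Rrefl.
  apply: functional_extensionality => i; rewrite /c.
  by rewrite ltnS leq_eqVlt ltn_eqF ?orbF // (leq_trans (ltn_ord i) Hk).
pose i0 := Ordinal Hk.
have Eck : c k = (fun i => if i == i0 then a i0 else c k i).
  by apply: functional_extensionality => i; case: eqP => // ->; rewrite /c ltnn.
have Eck1 : c k.+1 = (fun i => if i == i0 then b i0 else c k i).
  apply: functional_extensionality => i; case: eqP => [->|Hi]; first by rewrite /c ltnSn.
  rewrite /c ltnS leq_eqVlt; suff /negbTE -> : nat_of_ord i != k by [].
  by apply/eqP => Ei; apply: Hi; apply: val_inj.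
by rewrite Eck Eck1; apply: Runary (Hab i0).
Qed.

Lemma Nabla_cong : is_congruence (@Nabla S A).
Proof. by do 3 (split; first by []). Qed.

Lemma Cg_cong (R : crel A) : is_congruence (Cg R).
Proof.
split; first by move=> x th Hth _; apply: cong_refl.
split; first by move=> x y H th Hth HR; apply: cong_sym (H _ Hth HR).
split; first by move=> x y z H1 H2 th Hth HR; apply: cong_trans (H1 _ Hth HR) (H2 _ Hth HR).
by move=> o a b H th Hth HR; apply: cong_interp => // i; apply: H.
Qed.

Lemma Cg_min (R th : crel A) : is_congruence th -> subrel R th -> subrel (Cg R) th.
Proof. by move=> Hth HR x y; apply. Qed.

Lemma cjoin_cong (a b : crel A) : is_congruence (cjoin a b).
Proof. exact: Cg_cong. Qed.

Lemma cjoin_l (a b : crel A) : subrel a (cjoin a b).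
Proof. by move=> x y H th _; apply; left. Qed.

Lemma cjoin_r (a b : crel A) : subrel b (cjoin a b).
Proof. by move=> x y H th _; apply; right. Qed.

Lemma cjoin_min (a b c : crel A) :
  is_congruence c -> subrel a c -> subrel b c -> subrel (cjoin a b) c.
Proof. by move=> Hc Ha Hb; apply: Cg_min => // x y [/Ha|/Hb]. Qed.

Lemma cmeet_cong (a b : crel A) :
  is_congruence a -> is_congruence b -> is_congruence (cmeet a b).
Proof.
move=> Ha Hb; split; first by move=> x; split; apply: cong_refl.
split; first by move=> x y [] ? ?; split; apply: cong_sym.
split; first by move=> x y z [] ? ? [] ? ?; split; apply: cong_trans; eauto.
by move=> o u v H; split; apply: cong_interp => // i; case: (H i).
Qed.

Lemma commutator_cong (a b : crel A) : is_congruence (commutator a b).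
Proof.
split; first by move=> x d Hd _; apply: cong_refl.
split; first by move=> x y H d Hd HC; apply: cong_sym (H _ Hd HC).
split; first by move=> x y z H1 H2 d Hd HC; apply: cong_trans (H1 _ Hd HC) (H2 _ Hd HC).
by move=> o u v H d Hd HC; apply: cong_interp => // i; apply: H.
Qed.

Lemma centralizes_commutator (a b : crel A) : centralizes a b (commutator a b).
Proof. by move=> t x y u v Hxy Huv H d Hd HC; apply: (HC t x y u v Hxy Huv); apply: H. Qed.

Lemma centralizes_self_l (a b : crel A) : is_congruence a -> centralizes a b a.
Proof.
move=> Ha t x y u v Hxy Huv H.
have Hy w : a (eval (envsum x w) t) (eval (envsum y w) t).
  by apply: cong_eval => // -[i|j] /=; [exact: Hxy|exact: cong_refl].
exact: cong_trans (cong_sym Ha (Hy u)) (cong_trans Ha H (Hy v)).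
Qed.

Lemma commutator_sub_l (a b : crel A) : is_congruence a -> subrel (commutator a b) a.
Proof. by move=> Ha x y; apply; last exact: centralizes_self_l. Qed.

Lemma comm_pow_cong (a : crel A) n : is_congruence a -> is_congruence (comm_pow a n).
Proof. by case: n => [|n] //= _; apply: commutator_cong. Qed.

Lemma comm_pow_sub (a : crel A) n : is_congruence a -> subrel (comm_pow a n) a.
Proof.
move=> Ha; elim: n => [|n IH] //= x y H.
exact/IH/(commutator_sub_l (comm_pow_cong n Ha) H).
Qed.

End Congruences.

Arguments centralizes_commutator {S A} a b.

Section PairAlgebra.
Variables (S : signature) (A : algebra S) (bt : crel A) (Hb : is_congruence bt).

Definition pair_interp (o : sop S) (args : 'I_(sar o) -> {p : A * A | bt p.1 p.2}) :
  {p : A * A | bt p.1 p.2} :=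
  exist _ (interp (fun i => (proj1_sig (args i)).1), interp (fun i => (proj1_sig (args i)).2))
    (cong_interp Hb (fun i => proj2_sig (args i))).

Definition pair_alg : algebra S := Algebra pair_interp.

Definition pfst (U : pair_alg) : A := (proj1_sig U).1.
Definition psnd (U : pair_alg) : A := (proj1_sig U).2.

Lemma pair_rel (U : pair_alg) : bt (pfst U) (psnd U).
Proof. exact: proj2_sig U. Qed.

Definition mkpair (x y : A) (H : bt x y) : pair_alg := exist (fun p : A * A => bt p.1 p.2) (x, y) H.

Definition diag (a : A) : pair_alg := mkpair (cong_refl Hb a).

Lemma pair_eq (U V : pair_alg) : pfst U = pfst V -> psnd U = psnd V -> U = V.
Proof.
move=> E1 E2; apply: sig_eq.
by rewrite [proj1_sig U]surjective_pairing [proj1_sig V]surjective_pairing; congr pair.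
Qed.

Lemma pfst_eval (X : Type) (E : X -> pair_alg) (t : term S X) :
  pfst (eval E t) = eval (pfst \o E) t.
Proof. by elim: t => [x|o ts IH] //=; congr interp; apply: functional_extensionality. Qed.

Lemma psnd_eval (X : Type) (E : X -> pair_alg) (t : term S X) :
  psnd (eval E t) = eval (psnd \o E) t.
Proof. by elim: t => [x|o ts IH] //=; congr interp; apply: functional_extensionality. Qed.

Lemma pair_in_variety (Sigma : identities S) :
  in_variety Sigma A -> in_variety Sigma pair_alg.
Proof. by move=> HA s t Hst e; apply: pair_eq; rewrite !(pfst_eval, psnd_eval) (HA s t Hst). Qed.

Definition pswap (U : pair_alg) : pair_alg := mkpair (cong_sym Hb (pair_rel U)).

Lemma pswapK : involutive pswap.
Proof. by move=> U; apply: pair_eq. Qed.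

Lemma pswap_eval (X : Type) (E : X -> pair_alg) (t : term S X) :
  eval (pswap \o E) t = pswap (eval E t).
Proof.
apply: pair_eq.
  by rewrite [LHS]pfst_eval [RHS]psnd_eval.
by rewrite [LHS]psnd_eval [RHS]pfst_eval.
Qed.

End PairAlgebra.

Arguments pfst {S A bt Hb} U /.
Arguments psnd {S A bt Hb} U /.
Arguments pswap {S A bt Hb} U.
Arguments pair_in_variety {S A bt} Hb {Sigma}.

Section Quotient.
Variables (S : signature) (A : algebra S) (th : crel A) (Hth : is_congruence th).

Lemma qproj_eq x y : qproj th x = qproj th y <-> th x y.
Proof.
split => [/(f_equal (fun X => proj1_sig X y)) /= ->|H]; first exact: cong_refl.
apply: sig_eq; apply: functional_extensionality => z /=.
apply: propositional_extensionality; split; apply: cong_trans => //.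
exact: cong_sym.
Qed.

Lemma qproj_qrep (X : quotient th) : qproj th (qrep X) = X.
Proof.
apply: sig_eq; rewrite /qrep /=.
by case: (constructive_indefinite_description _ _) => a /= ->.
Qed.

Lemma qrep_qproj x : th (qrep (qproj th x)) x.
Proof. by apply/qproj_eq; rewrite qproj_qrep. Qed.

Lemma interp_qproj (o : sop S) (a : 'I_(sar o) -> A) :
  @interp S (quotient th) o (fun i => qproj th (a i)) = qproj th (interp a).
Proof. by apply/qproj_eq; apply: cong_interp => // i; apply: qrep_qproj. Qed.

Lemma eval_quotient (X : Type) (e : X -> quotient th) (t : term S X) :
  eval e t = qproj th (eval (fun x => qrep (e x)) t).
Proof.
elim: t => [x|o ts IH] /=; first by rewrite qproj_qrep.
by apply/qproj_eq; apply: cong_interp => // i; rewrite IH; apply: qrep_qproj.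
Qed.

Lemma quotient_in_variety (Sigma : identities S) :
  in_variety Sigma A -> in_variety Sigma (quotient th).
Proof. by move=> HA s t Hst e; rewrite !eval_quotient (HA s t Hst). Qed.

End Quotient.

Section UnionClosure.
Variables (S : signature) (A : algebra S) (R1 R2 : crel A).
Hypotheses (H1 : is_congruence R1) (H2 : is_congruence R2).

Let rt_union := clos_refl_trans _ (fun x y => R1 x y \/ R2 x y).

Lemma rt_union_cong : is_congruence rt_union.
Proof.
have rt_union_sym x y : rt_union x y -> rt_union y x.
  elim=> [u v [/(cong_sym H1)|/(cong_sym H2)] Huv|u|u v w _ IH1 _ IH2];
    by [apply: rt_step; left|apply: rt_step; right|apply: rt_refl|apply: rt_trans IH2 IH1].
split; first exact: rt_refl.
split; first exact: rt_union_sym.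
split; first exact: rt_trans.
apply: compatible_of_unary; [exact: rt_refl|exact: rt_trans|].
move=> o f i0 w w'; elim=> [u v Huv|u|u v z _ IH1 _ IH2].
- apply: rt_step; case: Huv => Huv; [left|right]; apply: cong_interp => // i;
    by case: (i == i0); first [exact: Huv|exact: cong_refl].
- exact: rt_refl.
- exact: rt_trans IH1 IH2.
Qed.

Lemma cjoin_sub_rt_union : subrel (cjoin R1 R2) rt_union.
Proof. by apply: Cg_min; [exact: rt_union_cong|move=> x y; apply: rt_step]. Qed.

End UnionClosure.

Definition env4 (T : Type) (a b c d : T) (k : nat) : T := nth a [:: a; b; c; d] k.

Lemma env4_comp (T U : Type) (h : T -> U) (a b c d : T) :
  h \o env4 a b c d = env4 (h a) (h b) (h c) (h d).
Proof.
apply: functional_extensionality => k.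
by rewrite /env4; case: k => [|[|[|[|k]]]] //=; rewrite !nth_nil.
Qed.

Section TermFunctions.
Variables (S : signature) (B : algebra S).

Definition tfun := {f : (nat -> B) -> B | exists t : term S nat, forall e, f e = eval e t}.

Definition tfun_term (f : tfun) : term S nat :=
  proj1_sig (constructive_indefinite_description _ (proj2_sig f)).

Lemma tfun_termE (f : tfun) e : proj1_sig f e = eval e (tfun_term f).
Proof. by rewrite /tfun_term; case: (constructive_indefinite_description _ _). Qed.

Definition tfun_interp (o : sop S) (args : 'I_(sar o) -> tfun) : tfun.
Proof.
exists (fun e => interp (fun i => proj1_sig (args i) e)).
exists (tapp (fun i => tfun_term (args i))) => e /=.
by congr interp; apply: functional_extensionality => i; apply: tfun_termE.
Defined.

(* Satisfies every identity of B, so it stands in for the free algebra of the variety. *)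
Definition tfun_alg : algebra S := Algebra tfun_interp.

Lemma tfun_eval (X : Type) (E : X -> tfun_alg) (t : term S X) e :
  proj1_sig (eval E t) e = eval (fun x => proj1_sig (E x) e) t.
Proof. by elim: t => [x|o ts IH] //=; congr interp; apply: functional_extensionality. Qed.

Lemma tfun_in_variety (Sigma : identities S) :
  in_variety Sigma B -> in_variety Sigma tfun_alg.
Proof.
move=> HB s t Hst E; apply: sig_eq; apply: functional_extensionality => e.
by rewrite !tfun_eval (HB s t Hst).
Qed.

Definition tfun_var (k : nat) : tfun_alg.
Proof. by exists (fun e => e k); exists (tvar S k). Defined.

Definition app4 (f : tfun_alg) (a b c d : B) : B := proj1_sig f (env4 a b c d).

Lemma app4_var0 a b c d : app4 (tfun_var 0) a b c d = a.
Proof. by []. Qed.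

Lemma app4_var3 a b c d : app4 (tfun_var 3) a b c d = d.
Proof. by []. Qed.

Lemma app4_cong (R : crel B) (f : tfun_alg) a b c d a' b' c' d' : is_congruence R ->
  R a a' -> R b b' -> R c c' -> R d d' -> R (app4 f a b c d) (app4 f a' b' c' d').
Proof.
move=> HR Ha Hb Hc Hd; rewrite /app4 !tfun_termE; apply: (cong_eval _ HR) => k.
by rewrite /env4; case: k => [|[|[|[|k]]]] //=; rewrite !nth_nil.
Qed.

Definition subst_kernel (s : nat -> nat) : crel tfun_alg :=
  fun f g => forall e : nat -> B, proj1_sig f (e \o s) = proj1_sig g (e \o s).

Lemma subst_kernel_cong s : is_congruence (subst_kernel s).
Proof.
rewrite /subst_kernel; split; first by [].
split; first by move=> f g H e; rewrite H.
split; first by move=> f g h H H' e; rewrite H H'.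
by move=> o a b H e /=; congr interp; apply: functional_extensionality => i; apply: H.
Qed.

Definition day_unit (f : tfun_alg) := forall a b, app4 f a b b a = a.
Definition day_outer (f g : tfun_alg) := forall a b d, app4 f a b b d = app4 g a b b d.
Definition day_inner (f g : tfun_alg) := forall a c, app4 f a a c c = app4 g a a c c.

Definition merge12 (k : nat) : nat := if k is 2 then 1 else k.
Definition merge01_23 (k : nat) : nat := match k with 1 => 0 | 3 => 2 | k => k end.
Definition merge12_03 (k : nat) : nat := match k with 2 => 1 | 3 => 0 | k => k end.

Lemma subst_kernel_merge12 : subrel (subst_kernel merge12) (subst_kernel merge12_03).
Proof.
move=> f g H e; have := H (e \o merge12_03).
by have -> : e \o merge12_03 \o merge12 = e \o merge12_03
  by apply: functional_extensionality => -[|[|[|[|k]]]].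
Qed.

Lemma subst_kernel_unit f : subst_kernel merge12_03 f (tfun_var 0) -> day_unit f.
Proof.
move=> H a b; have := H (env4 a b b a); rewrite /app4.
by have -> : env4 a b b a \o merge12_03 = env4 a b b a
  by apply: functional_extensionality => -[|[|[|[|k]]]].
Qed.

Lemma subst_kernel_outer f g : subst_kernel merge12 f g -> day_outer f g.
Proof.
move=> H a b d; have := H (env4 a b b d); rewrite /app4.
by have -> : env4 a b b d \o merge12 = env4 a b b d
  by apply: functional_extensionality => -[|[|[|[|k]]]].
Qed.

Lemma subst_kernel_inner f g : subst_kernel merge01_23 f g -> day_inner f g.
Proof.
move=> H a c; have := H (env4 a a c c); rewrite /app4.
by have -> : env4 a a c c \o merge01_23 = env4 a a c c
  by apply: functional_extensionality => -[|[|[|[|k]]]].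
Qed.

Definition day_step (f g : tfun_alg) : Prop :=
  subst_kernel merge12 f g \/
  (subst_kernel merge01_23 f g /\ subst_kernel merge12_03 f g).

(* x_0, x_1, x_2, x_3 is a path in ker merge12 v ker merge01_23, and x_0, x_3 are related by
   ker merge12_03 >= ker merge12; modularity then puts (x_0, x_3) into
   ker merge12 v (ker merge01_23 ^ ker merge12_03). *)
Lemma day_chain (Sigma : identities S) :
  congruence_modular Sigma -> in_variety Sigma B ->
  clos_refl_trans _ day_step (tfun_var 0) (tfun_var 3).
Proof.
move=> Hmod HB.
have K12 := subst_kernel_cong merge12.
have K0123 := subst_kernel_cong merge01_23.
have K1203 := subst_kernel_cong merge12_03.
have Hjoin : cjoin (subst_kernel merge12) (subst_kernel merge01_23) (tfun_var 0) (tfun_var 3).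
  have J := cjoin_cong (subst_kernel merge12) (subst_kernel merge01_23).
  apply: (cong_trans J (y := tfun_var 1)); first by apply: cjoin_r.
  apply: (cong_trans J (y := tfun_var 2)); first by apply: cjoin_l.
  by apply: cjoin_r.
have H03 : subst_kernel merge12_03 (tfun_var 0) (tfun_var 3) by [].
have := Hmod _ (tfun_in_variety HB) _ _ _ K12 K0123 K1203 subst_kernel_merge12.
move=> /(_ (tfun_var 0) (tfun_var 3)) [_ /(_ (conj Hjoin H03))].
exact: cjoin_sub_rt_union K12 (cmeet_cong K0123 K1203) _ _.
Qed.

Lemma day_ind (Sigma : identities S) :
  congruence_modular Sigma -> in_variety Sigma B ->
  forall Q : crel tfun_alg, (forall f, Q f f) -> (forall f g h, Q f g -> Q g h -> Q f h) ->
  (forall f g, day_unit f -> day_unit g -> day_outer f g \/ day_inner f g -> Q f g) ->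
  Q (tfun_var 0) (tfun_var 3).
Proof.
move=> Hmod HB Q Qrefl Qtrans Qstep.
have K := subst_kernel_cong merge12_03.
have step_unit f g : day_step f g -> subst_kernel merge12_03 f (tfun_var 0) ->
    subst_kernel merge12_03 g (tfun_var 0).
  move=> Hfg Hf; have Kfg : subst_kernel merge12_03 f g.
    by case: Hfg => [/subst_kernel_merge12|[]].
  exact: (cong_trans K (cong_sym K Kfg) Hf).
suff chainQ f g : clos_refl_trans _ day_step f g -> subst_kernel merge12_03 f (tfun_var 0) ->
    Q f g /\ subst_kernel merge12_03 g (tfun_var 0).
  exact: (proj1 (chainQ _ _ (day_chain Hmod HB) (cong_refl K _))).
elim=> [{}f {}g Hfg|{}f|{}f g' {}g _ IH1 _ IH2] Hf.
- have Hg := step_unit f g Hfg Hf; split => //.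
  apply: Qstep; try exact: subst_kernel_unit.
  by case: Hfg => [/subst_kernel_outer|[/subst_kernel_inner]]; [left|right].
- by split.
- have [Q1 Hg'] := IH1 Hf; have [Q2 Hg] := IH2 Hg'.
  by split => //; apply: Qtrans Q1 Q2.
Qed.

End TermFunctions.

Section Shifting.
Variables (S : signature) (Sigma : identities S) (Hmod : congruence_modular Sigma).

Lemma shifting (B : algebra S) (al be ga : crel B) :
  in_variety Sigma B -> is_congruence al -> is_congruence be -> is_congruence ga ->
  subrel (cmeet al be) ga ->
  forall x y u z, be x y -> be u z -> al x u -> al y z -> ga x u -> ga y z.
Proof.
move=> HB Hal Hbe Hga Hmeet x y u z Bxy Buz Axu Ayz Gxu.
rewrite -(app4_var0 y x u z) -(app4_var3 y x u z).
apply: (day_ind Hmod HB (Q := fun f g => ga (app4 f y x u z) (app4 g y x u z))).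
- by move=> f; apply: cong_refl.
- by move=> f g h; apply: cong_trans.
move=> f g Uf Ug [Hfg|Hfg] /=.
- have Gux := cong_sym Hga Gxu.
  apply: (cong_trans Hga (y := app4 f y x x z)).
    by apply: app4_cong => //; exact: cong_refl.
  by rewrite Hfg; apply: app4_cong => //; exact: cong_refl.
- have [Aux Azy] := (cong_sym Hal Axu, cong_sym Hal Ayz).
  have [Byx Bzu] := (cong_sym Hbe Bxy, cong_sym Hbe Buz).
  have Aunit h : day_unit h -> al (app4 h y x u z) y.
    by move=> Uh; rewrite -{2}(Uh y x); apply: app4_cong => //; exact: cong_refl.
  apply: Hmeet; split; first exact: cong_trans (Aunit f Uf) (cong_sym Hal (Aunit g Ug)).
  apply: (cong_trans Hbe (y := app4 f y y z z)).
    by apply: app4_cong => //; exact: cong_refl.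
  by rewrite Hfg; apply: app4_cong => //; exact: cong_refl.
Qed.

End Shifting.

Fixpoint tsubst (S : signature) (X Y : Type) (s : X -> term S Y) (t : term S X) : term S Y :=
  match t with
  | tvar x => s x
  | tapp o ts => tapp (fun i => tsubst s (ts i))
  end.

Lemma eval_tsubst (S : signature) (A : algebra S) (X Y : Type) (s : X -> term S Y)
  (e : Y -> A) (t : term S X) :
  eval e (tsubst s t) = eval (fun x => eval e (s x)) t.
Proof. by elim: t => [x|o ts IH] //=; congr interp; apply: functional_extensionality. Qed.

Section Saturation.
Variables (S : signature) (N : algebra S) (D : N -> Prop).

Definition upd0 (E : nat -> N) (U : N) (k : nat) : N := if k is 0 then U else E k.

(* The largest congruence of N for which D is a union of classes. *)
Definition sat_cong : crel N := fun U V =>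
  forall (t : term S nat) (E : nat -> N), D (eval (upd0 E U) t) <-> D (eval (upd0 E V) t).

Lemma sat_cong_unary (o : sop S) (f : 'I_(sar o) -> N) (i0 : 'I_(sar o)) w w' :
  sat_cong w w' -> sat_cong (interp (fun i => if i == i0 then w else f i))
                            (interp (fun i => if i == i0 then w' else f i)).
Proof.
move=> H t E.
pose n := sar o.
(* variable 0 is the hole, 1..n the other arguments of o, n+1.. the parameters E *)
pose ctx : nat -> term S nat := fun k =>
  if k is k'.+1 then tvar S (k'.+1 + n)
  else tapp (fun i : 'I_(sar o) => if i == i0 then tvar S 0 else tvar S (nat_of_ord i).+1).
pose E' : nat -> N := fun m =>
  if m is m'.+1 then (if (m' < n)%N then f (insubd i0 m') else E (m' - n).+1) else w.
have key X : (fun k => eval (upd0 E' X) (ctx k))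
           = upd0 E (interp (fun i => if i == i0 then X else f i)).
  apply: functional_extensionality => -[|k] /=; last by rewrite ltnNge leq_addl /= addnK.
  congr interp; apply: functional_extensionality => i; case: (i == i0) => //=.
  by rewrite ltn_ord; congr f; apply: val_inj; rewrite val_insubd ltn_ord.
by have := H (tsubst ctx t) E'; rewrite !eval_tsubst !key.
Qed.

Lemma sat_cong_cong : is_congruence sat_cong.
Proof.
have sat_trans U V W : sat_cong U V -> sat_cong V W -> sat_cong U W.
  by move=> H1 H2 t E; rewrite H1 H2.
split; first by [].
split; first by move=> U V H t E; rewrite H.
split; first exact: sat_trans.
exact: compatible_of_unary sat_trans sat_cong_unary.
Qed.

Lemma sat_cong_pred U V : sat_cong U V -> D U -> D V.
Proof. by move=> /(_ (tvar S 0) (fun=> U)) []. Qed.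

Lemma sat_cong_greatest (R : crel N) :
  is_congruence R -> (forall U V, R U V -> D U -> D V) -> subrel R sat_cong.
Proof.
move=> HR HD U V H t E.
have H' : R (eval (upd0 E U) t) (eval (upd0 E V) t).
  by apply: cong_eval => // -[|k] //=; apply: cong_refl.
by split; apply: HD => //; apply: cong_sym.
Qed.

End Saturation.

Section Annihilator.
Variables (S : signature) (A : algebra S) (bt : crel A) (Hb : is_congruence bt).

Local Notation M := (pair_alg Hb).

Definition in_cong (d : crel A) (U : M) : Prop := d (pfst U) (psnd U).

(* (d : bt), the largest congruence centralizing bt modulo d *)
Definition annihilator (d : crel A) : crel A :=
  fun a b => sat_cong (in_cong d) (diag Hb a) (diag Hb b).

Definition prod_cong (d : crel A) : crel M :=
  fun U V => d (pfst U) (pfst V) /\ d (psnd U) (psnd V).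

Definition ker_pfst : crel M := fun U V => pfst U = pfst V.
Definition ker_psnd : crel M := fun U V => psnd U = psnd V.

Lemma prod_cong_cong d : is_congruence d -> is_congruence (prod_cong d).
Proof.
move=> Hd; split; first by move=> U; split; apply: cong_refl.
split; first by move=> U V [] ? ?; split; apply: cong_sym.
split; first by move=> U V W [] ? ? [] ? ?; split; apply: cong_trans; eauto.
by move=> o a b H; split; apply: cong_interp => // i; case: (H i).
Qed.

Lemma ker_pfst_cong : is_congruence ker_pfst.
Proof.
rewrite /ker_pfst; do 3 (split; first by move=> *; congruence).
by move=> o a b H /=; congr interp; apply: functional_extensionality.
Qed.

Lemma ker_psnd_cong : is_congruence ker_psnd.
Proof.
rewrite /ker_psnd; do 3 (split; first by move=> *; congruence).
by move=> o a b H /=; congr interp; apply: functional_extensionality.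
Qed.

Lemma annihilator_cong d : is_congruence (annihilator d).
Proof.
have HP := sat_cong_cong (in_cong d).
rewrite /annihilator; split; first by move=> a; apply: cong_refl.
split; first by move=> a b; apply: cong_sym.
split; first by move=> a b c; apply: cong_trans.
move=> o a b H.
have diag_interp (c : 'I_(sar o) -> A) : diag Hb (interp c) = interp (fun i => diag Hb (c i)).
  exact: pair_eq.
by rewrite !diag_interp; apply: cong_interp => // i; apply: H.
Qed.

Lemma sub_annihilator d : is_congruence d -> subrel d (annihilator d).
Proof.
move=> Hd a b Hab; apply: sat_cong_greatest (prod_cong_cong Hd) _ _ _ _.
  by move=> U V [H1 H2] HU; apply: cong_trans (cong_trans Hd (cong_sym Hd H1) HU) H2.
by split.
Qed.

Lemma pfst_eval_envsum (X Y : Type) (w1 : X -> M) (w2 : Y -> M) (t : term S (X + Y)) :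
  pfst (eval (envsum w1 w2) t) = eval (envsum (pfst \o w1) (pfst \o w2)) t.
Proof. by rewrite pfst_eval; apply: eval_ext => -[]. Qed.

Lemma psnd_eval_envsum (X Y : Type) (w1 : X -> M) (w2 : Y -> M) (t : term S (X + Y)) :
  psnd (eval (envsum w1 w2) t) = eval (envsum (psnd \o w1) (psnd \o w2)) t.
Proof. by rewrite psnd_eval; apply: eval_ext => -[]. Qed.

Definition shift0 (k : nat) : term S (nat + nat) :=
  if k is 0 then tvar S (inl 0) else tvar S (inr k).

Lemma eval_upd0 (N : algebra S) (E : nat -> N) (U : N) (t : term S nat) :
  eval (upd0 E U) t = eval (envsum (fun=> U) E) (tsubst shift0 t).
Proof. by rewrite eval_tsubst; apply: eval_ext => -[]. Qed.

Lemma centralizes_annihilator (al d : crel A) :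
  is_congruence al -> centralizes al bt d -> subrel al (annihilator d).
Proof.
move=> Hal HC a b Hab t E.
rewrite /in_cong !eval_upd0 !pfst_eval_envsum !psnd_eval_envsum /=.
have HE j : bt ((pfst \o E) j) ((psnd \o E) j) by apply: pair_rel.
by split; apply: HC => // i; apply: cong_sym.
Qed.

Lemma annihilator_centralizes (al d : crel A) :
  subrel al (annihilator d) -> centralizes al bt d.
Proof.
move=> Hann t x y u v Hxy Huv.
pose uv j := mkpair Hb (Huv j).
have XY : sat_cong (in_cong d) (eval (envsum (fun i => diag Hb (x i)) uv) t)
                                (eval (envsum (fun i => diag Hb (y i)) uv) t).
  apply: cong_eval (sat_cong_cong _) _ => -[i|j] /=; first exact: Hann.
  exact: cong_refl (sat_cong_cong _) _.
by move: (sat_cong_pred XY); rewrite /in_cong !pfst_eval_envsum !psnd_eval_envsum.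
Qed.

End Annihilator.

Arguments ker_pfst {S A bt} Hb.
Arguments ker_psnd {S A bt} Hb.
Arguments ker_pfst_cong {S A bt} Hb.
Arguments ker_psnd_cong {S A bt} Hb.
Arguments prod_cong {S A bt} Hb d.
Arguments prod_cong_cong {S A bt} Hb {d}.
Arguments centralizes_annihilator {S A bt} Hb {al d}.

Section ModularCentrality.
Variables (S : signature) (Sigma : identities S) (Hmod : congruence_modular Sigma)
  (A : algebra S) (HA : in_variety Sigma A) (bt : crel A) (Hb : is_congruence bt).

Local Notation M := (pair_alg Hb).

Lemma pfst_app4 (f : tfun_alg A) (W1 W2 W3 W4 : M) :
  pfst (eval (env4 W1 W2 W3 W4) (tfun_term f)) = app4 f (pfst W1) (pfst W2) (pfst W3) (pfst W4).
Proof. by rewrite pfst_eval env4_comp -tfun_termE. Qed.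

Lemma psnd_app4 (f : tfun_alg A) (W1 W2 W3 W4 : M) :
  psnd (eval (env4 W1 W2 W3 W4) (tfun_term f)) = app4 f (psnd W1) (psnd W2) (psnd W3) (psnd W4).
Proof. by rewrite psnd_eval env4_comp -tfun_termE. Qed.

Lemma sat_in_cong_fst (k : crel A) (U V : M) : is_congruence k ->
  sat_cong (in_cong k) U V -> psnd U = psnd V -> k (pfst U) (pfst V).
Proof.
move=> Hk; case: U V => [[p q] bpq] [[p' q'] bp'q'] HUV Esnd.
rewrite /pfst /psnd /= in HUV Esnd *; subst q'.
have bpp' : bt p p' := cong_trans Hb bpq (cong_sym Hb bp'q').
have key f : day_unit f -> k (app4 f p p' p' p') (app4 f p p p' p').
  move=> Uf; pose e := app4 f p p p' p'.
  have bep : bt e p.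
    rewrite /e -[X in bt _ X](Uf p p); have bp'p := cong_sym Hb bpp'.
    by apply: app4_cong => //; apply: cong_refl.
  have bep' : bt e p' := cong_trans Hb bep bpp'.
  pose U := mkpair Hb bpq; pose V := mkpair Hb bp'q'.
  (* f evaluated at ((p,e), -, V, (p',e)) maps U to (e,e), which is in k *)
  pose W (X : M) := eval (env4 (mkpair Hb (cong_sym Hb bep)) X V (mkpair Hb (cong_sym Hb bep')))
                         (tfun_term f).
  have HW : sat_cong (in_cong k) (W U) (W V).
    apply: cong_eval (sat_cong_cong _) _ => -[|[|[|[|j]]]] //=;
      by rewrite /env4 /= ?nth_nil; [exact: cong_refl (sat_cong_cong _) _..|exact: HUV].
  have := sat_cong_pred HW.
  rewrite /in_cong !pfst_app4 !psnd_app4 /= Uf.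
  by apply; apply: cong_refl.
rewrite -(app4_var0 p p' p' p') -{2}(app4_var3 p p' p' p').
apply: (day_ind Hmod HA (Q := fun f g => k (app4 f p p' p' p') (app4 g p p' p' p'))).
- by move=> f; apply: cong_refl.
- by move=> f g h; apply: cong_trans.
move=> f g Uf Ug [Hfg|Hfg] /=; first by rewrite (Hfg p p' p'); apply: cong_refl.
apply: (cong_trans Hk (key f Uf)); rewrite (Hfg p p').
exact: (cong_sym Hk (key g Ug)).
Qed.

Lemma sat_in_cong_pswap (k : crel A) (U V : M) : is_congruence k ->
  sat_cong (in_cong k) U V -> sat_cong (in_cong k) (pswap U) (pswap V).
Proof.
move=> Hk HUV t E.
have upd0_pswap W : upd0 E (pswap W) = pswap \o upd0 (pswap \o E) W.
  by apply: functional_extensionality => -[|j] //; rewrite /comp /= pswapK.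
have in_cong_pswap W : in_cong k (pswap W) <-> in_cong k W.
  by split; apply: cong_sym.
by rewrite !upd0_pswap !pswap_eval !in_cong_pswap.
Qed.

Lemma sat_in_cong_snd (k : crel A) (U V : M) : is_congruence k ->
  sat_cong (in_cong k) U V -> pfst U = pfst V -> k (psnd U) (psnd V).
Proof.
move=> Hk HUV Efst.
exact: (sat_in_cong_fst Hk (sat_in_cong_pswap Hk HUV) Efst).
Qed.

Lemma centralizes_mono (al k d : crel A) :
  is_congruence al -> is_congruence k -> is_congruence d ->
  centralizes al bt k -> subrel k d -> centralizes al bt d.
Proof.
move=> Hal Hk Hd HC Hkd t x y u v Hxy Huv Hx.
have Hann := centralizes_annihilator Hb Hal HC.
have HP := sat_cong_cong (in_cong (Hb := Hb) k).
pose uv j := mkpair Hb (Huv j).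
pose X := eval (envsum (fun i => diag Hb (x i)) uv) t.
pose Y := eval (envsum (fun i => diag Hb (y i)) uv) t.
have XY : sat_cong (in_cong k) X Y.
  by rewrite /X /Y; apply: (cong_eval _ HP) => -[i|j] /=; [exact: Hann|exact: cong_refl].
have Hxvyv : al (eval (envsum x v) t) (eval (envsum y v) t).
  by apply: (cong_eval _ Hal) => -[i|j] /=; [exact: Hxy|exact: cong_refl].
have meet : subrel (cmeet (ker_psnd Hb) (sat_cong (in_cong k))) (prod_cong Hb d).
  move=> U V [E2 HUV]; split; first exact/Hkd/(sat_in_cong_fst Hk HUV E2).
  by rewrite E2; apply: cong_refl.
have EX : psnd X = eval (envsum x v) t by rewrite psnd_eval_envsum.
have EY : psnd Y = eval (envsum y v) t by rewrite psnd_eval_envsum.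
have HdX : prod_cong Hb d (diag Hb (eval (envsum x v) t)) X.
  by rewrite /prod_cong pfst_eval_envsum EX; split; [exact: (cong_sym Hd Hx)|exact: cong_refl].
have [+ _] := shifting Hmod (pair_in_variety Hb HA) (ker_psnd_cong Hb) HP (prod_cong_cong Hb Hd)
  meet (Hann _ _ Hxvyv) XY (esym EX) (esym EY) HdX.
by rewrite pfst_eval_envsum /=; apply: cong_sym.
Qed.

Lemma centralizes_sym (al d : crel A) :
  is_congruence al -> is_congruence d -> centralizes al bt d -> centralizes bt al d.
Proof.
move=> Hal Hd HC t x y u v Hxy Huv Hx.
have Hann := centralizes_annihilator Hb Hal HC.
have HP := sat_cong_cong (in_cong (Hb := Hb) d).
pose xy i := mkpair Hb (Hxy i).
pose X := eval (envsum xy (fun j => diag Hb (u j))) t.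
pose Y := eval (envsum xy (fun j => diag Hb (v j))) t.
have XY : sat_cong (in_cong d) X Y.
  by rewrite /X /Y; apply: (cong_eval _ HP) => -[i|j] /=; [exact: cong_refl|exact: Hann].
have Hxuxv : al (eval (envsum x u) t) (eval (envsum x v) t).
  by apply: (cong_eval _ Hal) => -[i|j] /=; [exact: cong_refl|exact: Huv].
have meet : subrel (cmeet (sat_cong (in_cong d)) (ker_pfst Hb)) (prod_cong Hb d).
  move=> U V [HUV E1]; split; last exact: (sat_in_cong_snd Hd HUV E1).
  by rewrite E1; apply: cong_refl.
have EX : pfst X = eval (envsum x u) t by rewrite pfst_eval_envsum.
have EY : pfst Y = eval (envsum x v) t by rewrite pfst_eval_envsum.
have Hdxx : prod_cong Hb d (diag Hb (eval (envsum x u) t)) (diag Hb (eval (envsum x v) t)).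
  by split.
have [_] := shifting Hmod (pair_in_variety Hb HA) HP (ker_pfst_cong Hb) (prod_cong_cong Hb Hd)
  meet (x := diag Hb _) (y := X) (u := diag Hb _) (z := Y)
  (esym EX) (esym EY) (Hann _ _ Hxuxv) XY Hdxx.
by rewrite !psnd_eval_envsum.
Qed.

End ModularCentrality.

Section Semidegenerate.
Variables (S : signature) (Sigma : identities S) (Hmod : congruence_modular Sigma)
  (Hsemi : semidegenerate Sigma) (A : algebra S) (HA : in_variety Sigma A).

(* If (d : Nabla) = Nabla then the class of the diagonal in (A x A) / sat_cong is a
   one-element subalgebra, so the quotient is trivial. *)
Lemma semidegenerate_annihilator (d : crel A) : is_congruence d ->
  (forall a b, annihilator (Nabla_cong A) d a b) -> forall a b, d a b.
Proof.
move=> Hd Hann a b.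
pose HN := Nabla_cong A.
pose P := sat_cong (in_cong (Hb := HN) d).
have HP : is_congruence P := sat_cong_cong _.
pose B := quotient P.
have HB : in_variety Sigma B := quotient_in_variety HP (pair_in_variety HN HA).
pose x : B := qproj P (diag HN a).
have Hx (o : sop S) : @interp S B o (fun=> x) = x.
  rewrite /= /x; apply/(qproj_eq HP).
  apply: (cong_trans HP (y := @interp S _ o (fun=> diag HN a))).
    by apply: (cong_interp HP) => i; apply: qrep_qproj.
  have -> : @interp S _ o (fun=> diag HN a) = diag HN (@interp S A o (fun=> a)).
    exact: pair_eq.
  exact: Hann.
have := Hsemi HB (ex_intro _ x Hx) (qproj P (mkpair HN (I : Nabla a b))) x.
move=> /(qproj_eq HP) Hab.
exact: (sat_cong_pred (cong_sym HP Hab) (cong_refl Hd a)).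
Qed.

Lemma cjoin_commutator_Nabla (x y : crel A) :
  is_congruence x -> is_congruence y ->
  rel_eq (cjoin x y) (@Nabla S A) -> rel_eq (cjoin (commutator x x) y) (@Nabla S A).
Proof.
move=> Hx Hy Hxy; pose d := cjoin (commutator x x) y.
have Hd : is_congruence d := cjoin_cong _ _.
have Hcd : subrel (commutator x x) d := @cjoin_l _ _ _ _.
have Hyd : subrel y d := @cjoin_r _ _ _ _.
have Cxx : centralizes x x d :=
  centralizes_mono Hmod HA Hx Hx (commutator_cong x x) Hd (centralizes_commutator x x) Hcd.
have full (R : crel A) : is_congruence R -> subrel x R -> subrel y R -> forall a b, R a b.
  by move=> HR HxR HyR a b; apply: (cjoin_min HR HxR HyR); apply/Hxy.
have CNx : centralizes (@Nabla S A) x d.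
  apply: annihilator_centralizes => a b _; apply: (full _ (annihilator_cong Hx d)).
    exact: centralizes_annihilator.
  by move=> u v /Hyd; apply: sub_annihilator.
have CxN : centralizes x (@Nabla S A) d := centralizes_sym Hmod HA Hx (Nabla_cong A) Hd CNx.
move=> a b; split => // _; apply: (semidegenerate_annihilator Hd) => u v.
apply: (full _ (annihilator_cong (Nabla_cong A) d)).
  exact: centralizes_annihilator.
by move=> p q /Hyd; apply: sub_annihilator.
Qed.

Lemma comm_pow_cjoin_Nabla (x y : crel A) n :
  is_congruence x -> is_congruence y ->
  rel_eq (cjoin x y) (@Nabla S A) -> rel_eq (cjoin (comm_pow x n) y) (@Nabla S A).
Proof.
move=> Hx Hy Hxy; elim: n => [|n IH] //=.
exact: cjoin_commutator_Nabla (comm_pow_cong n Hx) Hy IH.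
Qed.

End Semidegenerate.

Section Correspondence.
Variables (S : signature) (A : algebra S) (th : crel A) (Hth : is_congruence th).

Local Notation Q := (quotient th).

Definition pull (b : crel Q) : crel A := fun x y => b (qproj th x) (qproj th y).
Definition push (J : crel A) : crel Q := fun X Y => J (qrep X) (qrep Y).

Lemma pull_cong (b : crel Q) : is_congruence b -> is_congruence (pull b).
Proof.
move=> Hb; rewrite /pull; split; first by move=> x; apply: (cong_refl Hb).
split; first by move=> x y; apply: (cong_sym Hb).
split; first by move=> x y z; apply: (cong_trans Hb).
by move=> o a c H; rewrite -!(interp_qproj Hth); apply: (cong_interp Hb).
Qed.

Lemma sub_pull (b : crel Q) : is_congruence b -> subrel th (pull b).
Proof. by move=> Hb x y /(qproj_eq Hth) Exy; rewrite /pull Exy; apply: (cong_refl Hb). Qed.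

Lemma pull_sub (J : crel A) : is_congruence J -> subrel th J -> subrel (pull (push J)) J.
Proof.
move=> HJ HthJ x y; rewrite /pull /push => Hxy.
apply: (cong_trans HJ (HthJ _ _ (cong_sym Hth (qrep_qproj Hth x)))).
exact: (cong_trans HJ Hxy (HthJ _ _ (qrep_qproj Hth y))).
Qed.

Lemma sub_push (b : crel Q) (J : crel A) : subrel (pull b) J -> subrel b (push J).
Proof. by move=> HbJ X Y HXY; apply: HbJ; rewrite /pull !qproj_qrep. Qed.

Lemma push_cong (J : crel A) : is_congruence J -> subrel th J -> is_congruence (push J).
Proof.
move=> HJ HthJ; rewrite /push; split; first by move=> X; apply: (cong_refl HJ).
split; first by move=> X Y; apply: (cong_sym HJ).
split; first by move=> X Y Z; apply: (cong_trans HJ).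
move=> o a c H /=.
apply: (cong_trans HJ (HthJ _ _ (qrep_qproj Hth _))).
apply: (cong_trans HJ _ (HthJ _ _ (cong_sym Hth (qrep_qproj Hth _)))).
exact: (cong_interp HJ).
Qed.

Lemma pull_meet_Delta (b b' : crel Q) :
  rel_eq (cmeet b b') (@Delta S Q) -> subrel (cmeet (pull b) (pull b')) th.
Proof. by move=> Hm x y /Hm /(qproj_eq Hth). Qed.

Lemma pull_join_Nabla (b b' : crel Q) : is_congruence b -> is_congruence b' ->
  rel_eq (cjoin b b') (@Nabla S Q) -> rel_eq (cjoin (pull b) (pull b')) (@Nabla S A).
Proof.
move=> Hb Hb' Hj x y; split => // _.
pose J := cjoin (pull b) (pull b').
have HJ : is_congruence J := cjoin_cong _ _.
have HthJ : subrel th J by move=> u v /(sub_pull Hb); apply: cjoin_l.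
apply: (pull_sub HJ HthJ).
apply: (cjoin_min (push_cong HJ HthJ)); last by apply/Hj.
  by apply: sub_push; apply: cjoin_l.
by apply: sub_push; apply: cjoin_r.
Qed.

Lemma quot_rel_pull (R : crel A) (b : crel Q) :
  rel_eq R (pull b) -> rel_eq (@quot_rel S A th R) b.
Proof.
move=> HR X Y; split => [[x [y [-> [-> /HR]]]] //|HXY].
exists (qrep X), (qrep Y); rewrite !qproj_qrep; split => //; split => //.
by apply/HR; rewrite /pull !qproj_qrep.
Qed.

End Correspondence.

Lemma modular_cjoin_eq (S : signature) (Sigma : identities S) (A : algebra S)
  (g al al' th : crel A) :
  congruence_modular Sigma -> in_variety Sigma A ->
  is_congruence g -> is_congruence al -> is_congruence al' ->
  subrel g al -> subrel th al -> rel_eq (cjoin g al') (@Nabla S A) ->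
  subrel (cmeet al' al) th -> rel_eq (cjoin g th) al.
Proof.
(* al = (g v al') ^ al = g v (al' ^ al) *)
move=> Hmod HA Hg Hal Hal' Hgal Hthal Hj Hm x y; split; first exact: cjoin_min.
move=> Hxy; have /(Hmod A HA g al' al Hg Hal' Hal Hgal) : cmeet (cjoin g al') al x y.
  by split => //; apply/Hj.
apply: (cjoin_min (cjoin_cong g th) (@cjoin_l _ _ g th)).
by move=> u v /Hm; apply: cjoin_r.
Qed.

Theorem proposition5p19 (S : signature) (Sigma : identities S)
  (Hmod : congruence_modular Sigma)
  (Hsemi : semidegenerate Sigma)
  (HK : forall B : algebra S, in_variety Sigma B -> K_closed B)
  (Hpres : forall B : algebra S, in_variety Sigma B -> preserves_boolean_center B)
  (A : algebra S) (HA : in_variety Sigma A) (Hhyp : hyperarchimedean A)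
  (th : crel A) (Hth : is_congruence th) :
  CBLP th.
Proof.
move=> b [Hb [b' [Hb' [Hmeet Hjoin]]]].
have Hal := pull_cong Hth Hb; have Hal' := pull_cong Hth Hb'.
have [n [_ Hg]] := Hhyp _ Hal.
exists (comm_pow (pull b) n); split => //; apply: quot_rel_pull.
have Hj := comm_pow_cjoin_Nabla Hmod Hsemi HA n Hal Hal' (pull_join_Nabla Hth Hb Hb' Hjoin).
have Hm : subrel (cmeet (pull b') (pull b)) th.
  by move=> x y [? ?]; apply: (pull_meet_Delta Hth Hmeet).
exact: (modular_cjoin_eq Hmod HA (comm_pow_cong n Hal) Hal Hal' (comm_pow_sub (n := n) Hal)
          (sub_pull Hth Hb) Hj Hm).
Qed.
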